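(* The regular module $\mathbb{M}_2$ is injective as a bigraded $\mathbb{M}_2$-module (in the category of bigraded $\mathbb{M}_2$-modules and bidegree-preserving homomorphisms).
   Context: $\mathbb{M}_2$ is the bigraded commutative $\mathbb{F}_2$-algebra with $\mathbb{F}_2$-basis the elements $\rho^m\tau^n$ ($m,n\ge0$) in bidegree $(m,m+n)$ and $\frac{\theta}{\rho^m\tau^n}$ ($m,n\ge 0$) in bidegree $(-m,-2-m-n)$; multiplication: $\rho^a\tau^b\cdot\rho^c\tau^d=\rho^{a+c}\tau^{b+d}$, $\rho^a\tau^b\cdot\frac{\theta}{\rho^c\tau^d}=\frac{\theta}{\rho^{c-a}\tau^{d-b}}$ if $a\le c,b\le d$ and $0$ otherwise, and the product of two elements of the form $\frac{\theta}{\rho^c\tau^d}$ is $0$. (It is $H^{*,*}(pt;\underline{\mathbb{F}_2})$.) *)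

From HB Require Import structures.
From mathcomp Require Import all_boot all_order all_algebra.
Set Implicit Arguments. Unset Strict Implicit. Unset Printing Implicit Defensive.
Import Order.TTheory GRing.Theory Num.Theory.
Local Open Scope ring_scope.

(** The F_2-basis of M_2 consists of
  - rho^m tau^n       (m,n >= 0) in bidegree (m, m+n), and
  - theta/(rho^m tau^n) (m,n >= 0) in bidegree (-m, -2-m-n).
  Hence the bidegree (p,q) contains exactly one basis element if
  [posD p q] (p >= 0, q >= p : it is rho^p tau^(q-p)) or
  [negD p q] (p <= 0, q <= p - 2 : it is theta/(rho^(-p) tau^(p-2-q))),
  and none otherwise (the two conditions are disjoint).  *)

Definition posD (p q : int) : bool := (0 <= p) && (p <= q).
Definition negD (p q : int) : bool := (p <= 0) && (q <= p - 2).

Definition dimM2 (p q : int) : nat := (posD p q || negD p q)%N.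

(** The piece of M_2 in bidegree (p,q): the F_2-vector space
    F_2^(dimM2 p q); when it is 1-dimensional the basis element
    (the monomial of that bidegree) is the row vector [const_mx 1]. *)
Definition M2 (p q : int) : lmodType 'F_2 := 'rV['F_2]_(dimM2 p q).

(** coefficient of a homogeneous element on the basis monomial of its
    bidegree (0 if the bidegree is empty) *)
Definition coefM2 (p q : int) (x : M2 p q) : 'F_2 := \sum_i x 0 i.

(** The product of the basis monomials in bidegrees (a,b) and (p,q) is the
    basis monomial of bidegree (a+p,b+q) exactly when [prodnz a b p q]:
    - rho^a tau^b * rho^c tau^d = rho^(a+c) tau^(b+d) (always nonzero);
    - rho^a tau^b * theta/(rho^c tau^d) = theta/(rho^(c-a) tau^(d-b)) if
      a <= c and b <= d, which happens exactly when the target bidegree is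
      a theta-bidegree, and 0 otherwise;
    - the product of two theta-monomials is 0. *)
Definition prodnz (a b p q : int) : bool :=
  [|| posD a b && posD p q,
      posD a b && negD p q && negD (a + p) (b + q)
    | negD a b && posD p q && negD (a + p) (b + q)].

Definition mulM2 (a b p q : int) (x : M2 a b) (y : M2 p q) : M2 (a + p) (b + q) :=
  const_mx (if prodnz a b p q then coefM2 x * coefM2 y else 0).

Definition oneM2 : M2 0 0 := const_mx 1.

Definition act_type (M : int -> int -> lmodType 'F_2) :=
  forall a b p q : int, M2 a b -> M p q -> M (a + p) (b + q).

Definition castM (M : int -> int -> Type) (p q p' q' : int)
  (e1 : p = p') (e2 : q = q') (x : M p q) : M p' q' :=
  match e1 in _ = r, e2 in _ = s return M r s with erefl, erefl => x end.

Definition bgmod_axioms (M : int -> int -> lmodType 'F_2) (act : act_type M) : Prop :=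
  (forall a b p q (r1 r2 : M2 a b) (m : M p q),
          act a b p q (r1 + r2) m = act a b p q r1 m + act a b p q r2 m) /\
      (forall a b p q (r : M2 a b) (m1 m2 : M p q),
          act a b p q r (m1 + m2) = act a b p q r m1 + act a b p q r m2) /\
      (forall a b p q (k : 'F_2) (r : M2 a b) (m : M p q),
          act a b p q (k *: r) m = k *: act a b p q r m) /\
      (forall a b p q (k : 'F_2) (r : M2 a b) (m : M p q),
          act a b p q r (k *: m) = k *: act a b p q r m) /\
      (forall p q (m : M p q),
          act 0 0 p q oneM2 m = castM (M:=M) (esym (add0r p)) (esym (add0r q)) m) /\
      (forall a b c d p q (r : M2 a b) (s : M2 c d) (m : M p q),
          act a b (c + p) (d + q) r (act c d p q s m)
          = castM (M:=M) (esym (addrA a c p)) (esym (addrA b d q))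
                  (act (a + c) (b + d) p q (mulM2 r s) m)).

Record bgmod := BGMod {
  bg_carrier :> int -> int -> lmodType 'F_2;
  bg_act : act_type bg_carrier;
  bg_axioms : bgmod_axioms bg_act }.
Arguments bg_act : clear implicits.

Definition is_bghom (M : int -> int -> lmodType 'F_2) (actM : act_type M)
  (N : int -> int -> lmodType 'F_2) (actN : act_type N)
  (f : forall p q, M p q -> N p q) : Prop :=
  (forall p q (k : 'F_2) (x y : M p q), f p q (k *: x + y) = k *: f p q x + f p q y)
  /\ (forall a b p q (r : M2 a b) (m : M p q),
        f (a + p) (b + q) (actM a b p q r m) = actN a b p q r (f p q m)).

Definition bg_injective (N : int -> int -> lmodType 'F_2) (actN : act_type N) : Prop :=
  forall (A B : bgmod) (i : forall p q, A p q -> B p q)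
         (f : forall p q, A p q -> N p q),
    is_bghom (bg_act A) (bg_act B) i ->
    (forall p q, injective (i p q)) ->
    is_bghom (bg_act A) actN f ->
    exists g : forall p q, B p q -> N p q,
      is_bghom (bg_act B) actN g /\ (forall p q (x : A p q), g p q (i p q x) = f p q x).

Definition M2act : act_type M2 := mulM2.

From HB Require Import structures.
From mathcomp Require Import all_boot all_order all_algebra.
From mathcomp Require Import zify boolp classical_sets.
Set Implicit Arguments. Unset Strict Implicit. Unset Printing Implicit Defensive.
Import GRing.Theory.
Local Open Scope ring_scope.

(* M_2 is self-dual: the monomials of bidegrees (p, q) and (-p, -2-q) multiply to
   theta in bidegree (0, -2), and a product of two monomials is nonzero exactly
   when pairing it with the monomial of the dual bidegree gives theta.  Hence a
   homomorphism B -> M_2 amounts to an F_2-linear functional l on B_(0,-2): it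
   sends x in B_(p,q) to l applied to (monomial of bidegree (-p, -2-q)) . x,
   times the monomial of bidegree (p, q).  Injectivity of M_2 thus reduces to
   extending linear functionals along injections of F_2-vector spaces, which
   Zorn's lemma provides. *)

Lemma F2_cases (k : 'F_2) : k = 0 \/ k = 1.
Proof. by case: k => [[|[|//]] ?]; [left|right]; apply/eqP. Qed.

Lemma addrr_F2 (V : lmodType 'F_2) (v : V) : v + v = 0.
Proof. by rewrite -[v]scale1r -scalerDl addrr_pchar2 ?scale0r //; exact: pchar_Fp. Qed.

Definition F2functional (V : lmodType 'F_2) (l : V -> 'F_2) : Prop :=
  forall k x y, l (k *: x + y) = k * l x + l y.

Lemma F2functionalP (V : lmodType 'F_2) (l : V -> 'F_2) :
  F2functional l <-> {morph l : x y / x + y}.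
Proof.
split=> [hl x y|lD k x y]; first by have := hl 1 x y; rewrite scale1r mul1r.
have l0 : l 0 = 0 by apply: (addrI (l 0)); rewrite -lD !addr0.
by rewrite lD; case: (F2_cases k) => ->; rewrite ?scale0r ?mul0r ?l0 ?scale1r ?mul1r.
Qed.

Lemma F2functionalZ (V : lmodType 'F_2) (l : V -> 'F_2) k x :
  F2functional l -> l (k *: x) = k * l x.
Proof.
move=> hl; have l0 : l 0 = 0.
  by have := hl 1 0 0; rewrite scale1r addr0 mul1r addrr_pchar2 //; exact: pchar_Fp.
by have := hl k x 0; rewrite !addr0 l0 addr0.
Qed.

Section additive_extension.
Variables (V W X : zmodType) (i : W -> V) (f : W -> X).
Hypothesis V2 : forall v : V, v + v = 0.
Hypotheses (iD : {morph i : x y / x + y}) (i_inj : injective i).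
Hypothesis fD : {morph f : x y / x + y}.

Local Open Scope classical_set_scope.

Definition base_graph : set (V * X) := [set vx | exists w, vx = (i w, f w)].

Definition partial_extension (H : set (V * X)) : Prop :=
  [/\ forall v x1 x2, H (v, x1) -> H (v, x2) -> x1 = x2,
      forall v x w y, H (v, x) -> H (w, y) -> H (v + w, x + y)
    & base_graph `<=` H].

Lemma partial_extension_base : partial_extension base_graph.
Proof.
split=> //.
- by move=> v x1 x2 [w1 [-> ->]] [w2 [/i_inj <- ->]].
- by move=> v x w y [w1 [-> ->]] [w2 [-> ->]]; exists (w1 + w2); rewrite iD fD.
Qed.

Lemma partial_extension00 H : partial_extension H -> H (0, 0).
Proof.
case=> _ _ /(_ (i 0, f 0)) Hif; rewrite -[in X in (X, _)](V2 (i 0)) -iD addr0.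
have -> : 0 = f 0 by apply: (addrI (f 0)); rewrite -fD !addr0.
by apply: Hif; exists 0.
Qed.

(* As [v + v = 0], adjoining [v] to the domain only adds the translates [u + v];
   the extension sends each of them to the value at [u]. *)
Lemma partial_extension_adjoin H v :
  partial_extension H -> (forall x, ~ H (v, x)) ->
  partial_extension (H `|` [set ux | H (ux.1 + v, ux.2)]).
Proof.
move=> [fH aH gH] nHv.
have cross u x1 x2 : H (u, x1) -> H (u + v, x2) -> False.
  move=> h1 h2; apply: (nHv (x1 + x2)).
  by move: (aH _ _ _ _ h1 h2); rewrite addrA V2 add0r.
split.
- move=> u x1 x2 [h1|h1] [h2|h2]; [exact: fH h1 h2|by case: (cross _ _ _ h1 h2)|
    by case: (cross _ _ _ h2 h1)|exact: fH h1 h2].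
- move=> u x w y [h1|h1] [h2|h2] /=.
  + by left; apply: aH.
  + by right; rewrite /= -addrA; apply: aH.
  + by right; rewrite /= addrAC; apply: aH.
  + by left; move: (aH _ _ _ _ h1 h2); rewrite addrACA V2 addr0.
- by move=> ? ?; left; apply: gH.
Qed.

Lemma partial_extension_chain (F : set (set (V * X))) :
  (forall G, F G -> partial_extension (G `|` base_graph)) -> total_on F subset ->
  partial_extension (\bigcup_(G in F) G `|` base_graph).
Proof.
move=> FP Ftot; set U := _ `|` base_graph.
have sub G : F G -> G `|` base_graph `<=` U.
  by move=> FG p [Gp|bp]; [left; exists G|right].
have common a b : U a -> U b ->
    exists H, [/\ partial_extension H, H `<=` U, H a & H b].
  move=> [[G FG Ga]|ba] [[G' FG' G'b]|bb].
  - have [GG'|G'G] := Ftot G G' FG FG'.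
    + by exists (G' `|` base_graph); split; [exact: FP|exact: sub|left; exact: GG'|left].
    + by exists (G `|` base_graph); split; [exact: FP|exact: sub|left|left; exact: G'G].
  - by exists (G `|` base_graph); split; [exact: FP|exact: sub|left|right].
  - by exists (G' `|` base_graph); split; [exact: FP|exact: sub|right|left].
  - exists base_graph; split=> //; [exact: partial_extension_base|by move=> ? ?; right].
split.
- move=> v x1 x2 U1 U2; have [H [[fH _ _] _ H1 H2]] := common _ _ U1 U2.
  exact: fH H1 H2.
- move=> v x w y U1 U2; have [H [[_ aH _] sH H1 H2]] := common _ _ U1 U2.
  exact/sH/aH.
- by move=> ? ?; right.
Qed.

Lemma additive_extension :
  exists g : V -> X, {morph g : x y / x + y} /\ forall w, g (i w) = f w.
Proof.
(* Zorn is applied to sets [G] with [G `|` base_graph] a partial extension,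
   so that the empty chain has an upper bound. *)
have [G [PG maxG]] := Zorn_bigcup partial_extension_chain.
set H := G `|` base_graph in PG; have [fH aH gH] := PG.
have total v : exists x, H (v, x).
  apply: contrapT => nHv.
  have {}nHv x : ~ H (v, x) by move=> Hvx; apply: nHv; exists x.
  apply: (maxG (G `|` [set ux | H (ux.1 + v, ux.2)])).
    split; first exact: subsetUl.
    move=> /(_ (v, 0)) Gv0; apply: (nHv 0); left; apply: Gv0; right.
    by rewrite /= V2; exact: partial_extension00.
  by rewrite setUAC; exact: partial_extension_adjoin.
pose g v := projT1 (cid (total v)).
have Hg v : H (v, g v) := projT2 (cid (total v)).
exists g; split.
- by move=> v w; apply: (fH (v + w)); [exact: Hg|exact: aH].
- by move=> w; apply: (fH (i w)); [exact: Hg|apply: gH; exists w].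
Qed.

End additive_extension.

Lemma eq_castM (M : int -> int -> Type) p q p' q' (e1 e1' : p = p') (e2 e2' : q = q')
  (x : M p q) : castM e1 e2 x = castM e1' e2' x.
Proof. by rewrite (eq_irrelevance e1 e1') (eq_irrelevance e2 e2'). Qed.

Lemma castM_comp (M : int -> int -> Type) p q p' q' p'' q''
  (e1 : p' = p'') (e2 : q' = q'') (e3 : p = p') (e4 : q = q') (x : M p q) :
  castM e1 e2 (castM e3 e4 x) = castM (etrans e3 e1) (etrans e4 e2) x.
Proof. by move: e1 e2; case: p' / e3; case: q' / e4 => e1 e2; exact: eq_castM. Qed.

Lemma castM_hom (M N : int -> int -> Type) (f : forall p q, M p q -> N p q)
  p q p' q' (e1 : p = p') (e2 : q = q') (x : M p q) :
  f p' q' (castM e1 e2 x) = castM e1 e2 (f p q x).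
Proof. by case: p' / e1; case: q' / e2. Qed.

Lemma castMD (M : int -> int -> lmodType 'F_2) p q p' q' (e1 : p = p') (e2 : q = q')
  (x y : M p q) :
  castM (M:=M) e1 e2 (x + y) = castM (M:=M) e1 e2 x + castM (M:=M) e1 e2 y.
Proof. by case: p' / e1; case: q' / e2. Qed.

Lemma castMZ (M : int -> int -> lmodType 'F_2) p q p' q' (e1 : p = p') (e2 : q = q')
  k (x : M p q) : castM (M:=M) e1 e2 (k *: x) = k *: castM (M:=M) e1 e2 x.
Proof. by case: p' / e1; case: q' / e2. Qed.

Definition nzdeg (p q : int) : bool := posD p q || negD p q.

Lemma nzdeg_dual p q : nzdeg (- p) (-2 - q) = nzdeg p q.
Proof. rewrite /nzdeg /posD /negD; lia. Qed.

Lemma prodnz_nzl a b p q : prodnz a b p q -> nzdeg a b.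
Proof. rewrite /prodnz /nzdeg /posD /negD; lia. Qed.

Lemma prodnz_nzr a b p q : prodnz a b p q -> nzdeg p q.
Proof. rewrite /prodnz /nzdeg /posD /negD; lia. Qed.

Lemma prodnz_dual p q : nzdeg p q -> prodnz (- p) (-2 - q) p q.
Proof. rewrite /prodnz /nzdeg /posD /negD; lia. Qed.

(* Both sides say that the bidegrees [(-(a+p), -2-(b+q))], [(a, b)] and [(p, q)]
   have a nonzero product, which is then [theta]. *)
Lemma prodnz_dualA a b p q : nzdeg (a + p) (b + q) ->
  prodnz (- (a + p)) (-2 - (b + q)) a b = prodnz a b p q.
Proof. rewrite /prodnz /nzdeg /posD /negD; lia. Qed.

Lemma coefM2_const p q t : nzdeg p q -> coefM2 (const_mx t : M2 p q) = t.
Proof. by rewrite /coefM2 /M2 /dimM2 /nzdeg => ->; rewrite big_ord1 mxE. Qed.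

Lemma coefM2K p q (x : M2 p q) : const_mx (coefM2 x) = x.
Proof.
rewrite /coefM2; move: x; rewrite /M2 /dimM2; case: (_ || _) => x /=;
  apply/matrixP => i j; last by case: j.
by rewrite mxE big_ord1 !ord1.
Qed.

Lemma eq_constM2 p q (t1 t2 : 'F_2) :
  (nzdeg p q -> t1 = t2) -> const_mx t1 = const_mx t2 :> M2 p q.
Proof.
move=> h; apply/matrixP => i j; rewrite !mxE; move: j h; rewrite /dimM2 /nzdeg.
by case: (_ || _) => [_ /(_ isT) ->|[]].
Qed.

Lemma coefM2_functional p q : F2functional (@coefM2 p q).
Proof.
move=> k x y; rewrite /coefM2 mulr_sumr -big_split /=.
by apply: eq_bigr => j _; rewrite !mxE.
Qed.

Lemma coefM2_castM p q p' q' (e1 : p = p') (e2 : q = q') (x : M2 p q) :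
  coefM2 (castM (M:=M2) e1 e2 x) = coefM2 x.
Proof. by case: p' / e1; case: q' / e2. Qed.

Definition monomial a b : M2 a b := const_mx 1.

Lemma coefM2_monomial a b : nzdeg a b -> coefM2 (monomial a b) = 1.
Proof. exact: coefM2_const. Qed.

Section duality.
Variables (B : bgmod) (l : B 0 (-2) -> 'F_2).

Definition pairing a b p q (x : B p q) : 'F_2 :=
  match a + p =P 0, b + q =P -2 with
  | ReflectT e1, ReflectT e2 =>
      l (castM (M:=bg_carrier B) e1 e2 (bg_act B a b p q (monomial a b) x))
  | _, _ => 0
  end.

Lemma pairingE a b p q (x : B p q) (e1 : a + p = 0) (e2 : b + q = -2) :
  pairing a b x = l (castM (M:=bg_carrier B) e1 e2 (bg_act B a b p q (monomial a b) x)).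
Proof.
rewrite /pairing; case: (a + p =P 0) => [e1'|//]; case: (b + q =P -2) => [e2'|//].
by rewrite (eq_castM e1 e1' e2 e2').
Qed.

Lemma pairing_out a b p q (x : B p q) : ~ (a + p = 0 /\ b + q = -2) -> pairing a b x = 0.
Proof.
move=> out; rewrite /pairing.
by case: (a + p =P 0) => [e1|//]; case: (b + q =P -2) => [e2|//]; case: out.
Qed.

Hypothesis hl : F2functional l.

Lemma pairing_functional a b p q : F2functional (@pairing a b p q).
Proof.
have [_ [actD [_ [actZ _]]]] := bg_axioms B.
move=> k x y; have [[e1 e2]|out] := pselect (a + p = 0 /\ b + q = -2).
  by rewrite !(pairingE _ e1 e2) actD actZ castMD castMZ hl.
by rewrite !pairing_out // mulr0 addr0.
Qed.

Lemma pairing_act c d a b p q (s : M2 a b) (x : B p q) :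
  pairing c d (bg_act B a b p q s x)
  = (if prodnz c d a b then coefM2 s else 0) * pairing (c + a) (d + b) x.
Proof.
have [_ [_ [actZ1 [_ [_ actA]]]]] := bg_axioms B.
have [[e1 e2]|out] := pselect (c + (a + p) = 0 /\ d + (b + q) = -2); last first.
  by rewrite !pairing_out ?mulr0 // => -[? ?]; apply: out; rewrite !addrA.
have e1' : c + a + p = 0 by rewrite -addrA.
have e2' : d + b + q = -2 by rewrite -addrA.
rewrite (pairingE _ e1 e2) actA castM_comp.
set k := if _ then _ else _.
have -> : mulM2 (monomial c d) s = k *: monomial (c + a) (d + b).
  apply/matrixP => i j; rewrite !mxE mulr1 /k.
  by case E: prodnz; rewrite ?coefM2_monomial ?mul1r //; exact: prodnz_nzl E.
rewrite actZ1 castMZ F2functionalZ //.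
by rewrite (pairingE _ e1' e2') (eq_castM _ e1' _ e2').
Qed.

Definition dual_map p q (x : B p q) : M2 p q := const_mx (pairing (- p) (-2 - q) x).

Lemma dual_map_hom : is_bghom (bg_act B) M2act dual_map.
Proof.
split=> [p q k x y|a b p q s x].
  by rewrite /dual_map pairing_functional; apply/matrixP => i j; rewrite !mxE.
rewrite /dual_map pairing_act /M2act /mulM2; apply: eq_constM2 => nz.
have -> : - (a + p) + a = - p by lia.
have -> : -2 - (b + q) + b = -2 - q by lia.
rewrite prodnz_dualA //; case E: prodnz; last by rewrite mul0r.
by rewrite coefM2_const //; exact: prodnz_nzr E.
Qed.

End duality.

Lemma dual_map_comp (A B : bgmod) (i : forall p q, A p q -> B p q)
    (l : B 0 (-2) -> 'F_2) p q (x : A p q) :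
  is_bghom (bg_act A) (bg_act B) i ->
  dual_map (l \o i 0 (-2)) x = dual_map l (i p q x).
Proof.
move=> [_ iH]; rewrite /dual_map; congr const_mx.
have e2 : -2 - q + q = -2 by rewrite subrK.
by rewrite !(pairingE _ _ (addNr p) e2) /= castM_hom iH.
Qed.

Lemma dual_map_coefM2 (A : bgmod) (f : forall p q, A p q -> M2 p q) p q (x : A p q) :
  is_bghom (bg_act A) M2act f -> dual_map (@coefM2 0 (-2) \o f 0 (-2)) x = f p q x.
Proof.
move=> [_ fH]; rewrite -[RHS]coefM2K /dual_map; apply: eq_constM2 => nz.
have e2 : -2 - q + q = -2 by rewrite subrK.
rewrite (pairingE _ _ (addNr p) e2) /= castM_hom coefM2_castM fH /M2act /mulM2.
rewrite coefM2_const; last by rewrite addNr subrK.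
by rewrite prodnz_dual // coefM2_monomial ?mul1r // nzdeg_dual.
Qed.

Theorem proposition4p2 : bg_injective M2act.
Proof.
move=> A B i f hi i_inj hf.
have iD : {morph i 0 (-2) : x y / x + y}.
  by move=> x y; have := hi.1 0 (-2) 1 x y; rewrite !scale1r.
have fD : {morph @coefM2 0 (-2) \o f 0 (-2) : x y / x + y}.
  by apply/F2functionalP => k x y; rewrite /= hf.1 coefM2_functional.
have [l [lD li]] := additive_extension (@addrr_F2 _) iD (i_inj 0 (-2)) fD.
exists (dual_map l); split; first exact/dual_map_hom/F2functionalP.
move=> p q x; rewrite -(dual_map_comp _ _ hi).
have -> : l \o i 0 (-2) = @coefM2 0 (-2) \o f 0 (-2) by apply: funext.
exact: dual_map_coefM2.
Qed.
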